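(* Suppose $f$ satisfies the separation property. Then for every $n\geqslant 1$: (1) if $A,B\in\mathcal{A}_n$ and $A\cap B\neq\emptyset$, then $A=B$; (2) if $A_{i_1\dots i_n},A_{j_1\dots j_n}\in\mathcal{A}_n$ and $A_{i_1\dots i_n}=A_{j_1\dots j_n}$, then $(i_1,\dots,i_n)=(j_1,\dots,j_n)$.
   Context: Let $(X,d)$ be a compact metric space, $X_1,\dots,X_N$ ($N\geqslant 2$) non-empty pairwise disjoint open subsets with $X=\bigcup_i\overline{X_i}$, and $f:X\to X$ a map such that each restriction $f|_{X_i}$ admits a continuous extension $f_i:\overline{X_i}\to X$. Separation property: each $f_i$ is injective and $f_i(\overline{X_i})\cap f_j(\overline{X_j})=\emptyset$ for $i\neq j$. For $A\subset X$ let $F_i(A):=\overline{f(A\cap X_i)}$; for $(i_1,\dots,i_n)\in\{1,\dots,N\}^n$, $A_{i_1\dots i_n}:=F_{i_n}\circ F_{i_{n-1}}\circ\dots\circ F_{i_1}(X)$ is called an atom of generation $n$ if it is non-empty, and $\mathcal{A}_n$ denotes the set of atoms of generation $n$. *)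

From HB Require Import structures.
From mathcomp Require Import all_boot all_order all_algebra.
From mathcomp Require Import all_classical all_reals all_analysis.
Set Implicit Arguments. Unset Strict Implicit. Unset Printing Implicit Defensive.
Import Order.TTheory GRing.Theory Num.Theory.
Local Open Scope classical_set_scope.

Definition Fop {R : realType} {X : pseudoMetricType R} {N : nat}
  (Xs : 'I_N -> set X) (f : X -> X) (i : 'I_N) (A : set X) : set X :=
  closure (f @` (A `&` Xs i)).

(* A_{i_1 ... i_n} := F_{i_n} o ... o F_{i_1} (X); the word s = [:: i_1; ...; i_n]
   is applied left to right. *)
Definition atom {R : realType} {X : pseudoMetricType R} {N : nat}
  (Xs : 'I_N -> set X) (f : X -> X) (s : seq 'I_N) : set X :=
  foldl (fun A i => Fop Xs f i A) [set: X] s.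

From HB Require Import structures.
From mathcomp Require Import all_boot all_order all_algebra.
From mathcomp Require Import all_classical all_reals all_analysis.
Local Open Scope classical_set_scope.

(* Atoms are closed, so by compactness F_i(A) is contained in the compact
   image f_i(A ∩ cl X_i).  Hence a point of A_{s i} ∩ A_{t j} is
   f_i(a) = f_j(b) with a ∈ A_s ∩ cl X_i and b ∈ A_t ∩ cl X_j; disjointness
   of the images forces i = j and injectivity of f_i forces a = b, so A_s and
   A_t meet as well.  Induction on the common length shows that meeting atoms
   have the same word. *)

Section Atoms.
Variables (R : realType) (X : pseudoMetricType R) (N : nat).
Variables (Xs : 'I_N -> set X) (f : X -> X) (fi : 'I_N -> X -> X).

Lemma atom_rcons s i : atom Xs f (rcons s i) = Fop Xs f i (atom Xs f s).
Proof. by rewrite /atom foldl_rcons. Qed.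

Lemma closed_atom s : closed (atom Xs f s).
Proof.
elim/last_ind: s => [|s i _]; first exact: closedT.
by rewrite atom_rcons; apply: closed_closure.
Qed.

Hypothesis X_hausdorff : hausdorff_space X.
Hypothesis X_compact : compact [set: X].
Hypothesis fi_cont : forall i, {within closure (Xs i), continuous (fi i)}.
Hypothesis fi_ext : forall i x, Xs i x -> fi i x = f x.

Lemma Fop_subset_image {i : 'I_N} {A : set X} :
  closed A -> Fop Xs f i A `<=` fi i @` (A `&` closure (Xs i)).
Proof.
move=> cA; set C := fi i @` (A `&` closure (Xs i)).
have closedC : closed C.
  apply: compact_closed => //; apply: continuous_compact.
    by apply: continuous_subspaceW (fi_cont i); apply: subIsetr.
  exact: subclosed_compact (closedI cA (@closed_closure _ _)) X_compact _.
rewrite /Fop ((closure_id C).1 closedC).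
apply: closureS => _ [x [Ax Xix] <-].
by exists x; [split => //; apply: subset_closure | apply: fi_ext].
Qed.

Hypothesis fi_inj : forall i, {in closure (Xs i) &, injective (fi i)}.
Hypothesis fi_sep : forall i j, i != j ->
  fi i @` closure (Xs i) `&` fi j @` closure (Xs j) = set0.

Lemma eq_index_of_image_meet {i j : 'I_N} {a b : X} :
  closure (Xs i) a -> closure (Xs j) b -> fi i a = fi j b -> i = j.
Proof.
move=> Xia Xjb eab; apply/eqP/negPn/negP => /fi_sep disj.
have : (fi i @` closure (Xs i) `&` fi j @` closure (Xs j)) (fi i a).
  by split; [exists a | exists b].
by rewrite disj.
Qed.

Lemma atom_meet_eq_word s t : size s = size t ->
  atom Xs f s `&` atom Xs f t !=set0 -> s = t.
Proof.
elim/last_ind: s t => [|s i IHs] t; first by case: t.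
case/lastP: t => [|t j]; first by rewrite size_rcons.
rewrite !size_rcons !atom_rcons => -[size_st] [x [Fsx Ftx]].
have [a [As Xia] eax] := Fop_subset_image (closed_atom s) x Fsx.
have [b [Bt Xjb] ebx] := Fop_subset_image (closed_atom t) x Ftx.
have eab : fi i a = fi j b by rewrite eax ebx.
have eij := eq_index_of_image_meet Xia Xjb eab; subst j.
have ab : a = b by apply: (fi_inj i); rewrite ?in_setE.
subst b; by rewrite (IHs t size_st) //; exists a.
Qed.

End Atoms.

Theorem lemma1 (R : realType) (X : pseudoMetricType R) (N : nat)
  (Xs : 'I_N -> set X) (f : X -> X) (fi : 'I_N -> X -> X) :
  (* (X,d) compact metric space *)
  hausdorff_space X ->
  compact [set: X] ->
  (2 <= N)%N ->
  (forall i, open (Xs i)) ->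
  (forall i, Xs i !=set0) ->
  (forall i j, i != j -> Xs i `&` Xs j = set0) ->
  [set: X] = \bigcup_i closure (Xs i) ->
  (* f_i is a continuous extension of f restricted to X_i *)
  (forall i, {within closure (Xs i), continuous (fi i)}) ->
  (forall i x, Xs i x -> fi i x = f x) ->
  (* separation property *)
  (forall i, {in closure (Xs i) &, injective (fi i)}) ->
  (forall i j, i != j ->
     fi i @` closure (Xs i) `&` fi j @` closure (Xs j) = set0) ->
  forall n : nat, (1 <= n)%N ->
    (forall s t : n.-tuple 'I_N,
       atom Xs f s !=set0 -> atom Xs f t !=set0 ->
       atom Xs f s `&` atom Xs f t !=set0 -> atom Xs f s = atom Xs f t) /\
    (forall s t : n.-tuple 'I_N,
       atom Xs f s !=set0 -> atom Xs f t !=set0 ->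
       atom Xs f s = atom Xs f t -> s = t).
Proof.
move=> hX cX _ _ _ _ _ cont ext inj sep n _.
have eq_word (s t : n.-tuple 'I_N) :
    atom Xs f s `&` atom Xs f t !=set0 -> s = t :> seq 'I_N.
  by apply: (@atom_meet_eq_word R X N Xs f fi hX cX cont ext inj sep);
    rewrite !size_tuple.
split=> [s t _ _ st | s t [x sx] _ st].
  by rewrite (val_inj (eq_word s t st)).
by apply: val_inj; apply: eq_word; exists x; split; last rewrite -st.
Qed.
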